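(* Let $\mathcal{SB}=\langle\mathcal{L},A,\to,\text{supp}\rangle$ be an SBAF and $S\subseteq Sent(A)$ a compatible set of sentences. Then $$Arg_w(S)=\bigcup_{i\in\mathbb{N}}R^S_i(Init(S)).$$
   Context: A language is a triple $\mathcal{L}=\langle L,\overline{\cdot},n\rangle$: $L$ is a nonempty set of sentences; $\overline{\cdot}$ assigns to each $s\in L$ a set $\overline{s}\subseteq L$ of sentences incompatible with $s$, and is symmetric; $n$ is a partial naming function assigning to an argument $a$ a sentence $n(a)\in L$ (if undefined, put $\overline{n(a)}:=\emptyset$), with $\overline{n(\langle\{t\},t\rangle)}=\emptyset$. An argument is a pair $a=\langle Prem(a),Conc(a)\rangle$ with $Prem(a)$ a nonempty finite subset of $L$ and $Conc(a)\in L$; $Sent(a):=Prem(a)\cup\{Conc(a)\}$, $Sent(E):=\bigcup_{a\in E}Sent(a)$. Argument $a$ attacks $b$ ($a\to b$) if $Conc(a)\in\overline{s}$ for some $s\in Sent(b)$ or $Conc(a)\in\overline{n(b)}$. An SBAF is $\langle\mathcal{L},A,\to,\text{supp}\rangle$ with $A$ a finite set of arguments. For $E\subseteq A$: $E$ defends $a\in A$ if for every $b\in A$ with $b\to a$ some element of $E$ attacks $b$; $E$ is conflict-free if no $a,b\in E$ with $a\to b$; admissible if conflict-free and defends all its elements. $S$ is compatible if no $s,t\in S$ with $s\in\overline t$. $Arg_s(S):=\{a\in A\mid Prem(a)\subseteq S\text{ and }\overline{n(a)}\cap S=\emptyset\}$; $R^S(E):=\{a\in A\mid a\in Arg_s(S)\text{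 and }E\text{ defends }a\}$; $R^S_0(E):=E$, $R^S_{i+1}(E):=R^S(R^S_i(E))$. For compatible $S$, $Init(S)$ is the largest admissible subset of $\{a\in A\mid Sent(a)\subseteq S\text{ and }\overline{n(a)}\cap S=\emptyset\}$, and $Arg_w(S)$ is the $\subseteq$-least set $E\subseteq A$ with $Init(S)\subseteq E$ and $R^S(E)=E$. *)

From Stdlib Require Import List.
Import ListNotations.

Set Implicit Arguments.

(* An argument: a pair <Prem(a), Conc(a)>. Finiteness/nonemptiness of Prem is
   imposed via [valid_arg]. *)
Record Arg (L : Type) := mkArg { Prem : L -> Prop ; Conc : L }.
Arguments mkArg {L}.
Arguments Prem {L}.
Arguments Conc {L}.

Definition finite_set {X : Type} (P : X -> Prop) : Prop :=
  exists l : list X, forall x, P x <-> In x l.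

Definition valid_arg {L : Type} (a : Arg L) : Prop :=
  exists l : list L, l <> [] /\ forall s, Prem a s <-> In s l.

Definition single_arg {L : Type} (t : L) : Arg L := mkArg (fun x => x = t) t.

(* A language <L, overline, n>. [contr s t] means t \in overline(s). *)
Record Language (L : Type) := {
  L_nonempty : inhabited L ;
  contr : L -> L -> Prop ;
  contr_sym : forall s t, contr s t -> contr t s ;
  name : Arg L -> option L ;
  name_single : forall t,
      match name (single_arg t) with
      | Some x => forall y, ~ contr x y
      | None => True
      end }.
Arguments contr {L}.
Arguments name {L}.

Section Defs.
Context {L : Type} (Lg : Language L).

Definition contr_name (a : Arg L) (y : L) : Prop :=
  match name Lg a with Some x => contr Lg x y | None => False end.

Definition Sent (a : Arg L) (s : L) : Prop := Prem a s \/ s = Conc a.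
Definition SentE (E : Arg L -> Prop) (s : L) : Prop := exists a, E a /\ Sent a s.

Definition attacks (a b : Arg L) : Prop :=
  (exists s, Sent b s /\ contr Lg s (Conc a)) \/ contr_name b (Conc a).

Variable A : Arg L -> Prop.

Definition subset {X} (P Q : X -> Prop) := forall x, P x -> Q x.

Definition defends (E : Arg L -> Prop) (a : Arg L) : Prop :=
  forall b, A b -> attacks b a -> exists c, E c /\ attacks c b.

Definition conflict_free (E : Arg L -> Prop) : Prop :=
  forall a b, E a -> E b -> ~ attacks a b.

Definition admissible (E : Arg L -> Prop) : Prop :=
  conflict_free E /\ forall a, E a -> defends E a.

Definition compatible (X : L -> Prop) : Prop :=
  forall s t, X s -> X t -> ~ contr Lg t s.

Definition Arg_s (X : L -> Prop) (a : Arg L) : Prop :=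
  A a /\ subset (Prem a) X /\ (forall y, contr_name a y -> ~ X y).

Definition RS (X : L -> Prop) (E : Arg L -> Prop) (a : Arg L) : Prop :=
  Arg_s X a /\ defends E a.

Fixpoint RSi (X : L -> Prop) (i : nat) (E : Arg L -> Prop) : Arg L -> Prop :=
  match i with
  | O => E
  | Datatypes.S j => RS X (RSi X j E)
  end.

Definition init_cand (X : L -> Prop) (a : Arg L) : Prop :=
  A a /\ subset (Sent a) X /\ (forall y, contr_name a y -> ~ X y).

Definition is_Init (X : L -> Prop) (I : Arg L -> Prop) : Prop :=
  subset I (init_cand X) /\ admissible I /\
  forall F, subset F (init_cand X) -> admissible F -> subset F I.

Definition argw_candidate (X : L -> Prop) (I E : Arg L -> Prop) : Prop :=
  subset E A /\ subset I E /\ (forall a, RS X E a <-> E a).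

Definition is_Argw (X : L -> Prop) (I W : Arg L -> Prop) : Prop :=
  argw_candidate X I W /\ forall E, argw_candidate X I E -> subset W E.

End Defs.

(* An SBAF <Lang, A, ->, supp>; the attack relation is determined by Lang. *)
Record SBAF (L : Type) := {
  lang : Language L ;
  args : Arg L -> Prop ;
  args_finite : finite_set args ;
  args_valid : forall a, args a -> valid_arg a ;
  supp : Arg L -> Arg L -> Prop ;
  supp_in : forall a b, supp a b -> args a /\ args b }.
Arguments lang {L}.
Arguments args {L}.
Arguments supp {L}.

(* Init(S) exists because the candidate arguments of a compatible S are
   conflict-free, so the union of all their admissible subsets is admissible.
   Init(S) defends its own members and so lies in R^S(Init(S)); as R^S is
   monotone, the iterates R^S_i(Init(S)) form an increasing chain whose union is
   contained in every fixpoint above Init(S).  The union is itself a fixpoint: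
   an argument defended by it is defended by a single stage, because A is finite
   and each of its finitely many attackers is counter-attacked at some stage. *)

From Stdlib Require Import List Classical Lia.

Section Semantics.
Context {L : Type} (Lg : Language L) (A : Arg L -> Prop).

Lemma defends_mono (E F : Arg L -> Prop) a :
  subset E F -> defends Lg A E a -> defends Lg A F a.
Proof.
  intros HEF D b Hb Hba.
  destruct (D b Hb Hba) as [c [Hc Hcb]]; eauto.
Qed.

Lemma conflict_free_init_cand S :
  compatible Lg S -> conflict_free Lg (init_cand Lg A S).
Proof.
  intros Hcomp a b [_ [Sa _]] [_ [Sb Nb]] [[s [Hs Hcontr]] | Hname].
  - apply (Hcomp s (Conc a)); [apply Sb, Hs | apply Sa; now right |].
    now apply contr_sym.
  - apply (Nb (Conc a) Hname), Sa; now right.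
Qed.

Definition admissible_union (C : Arg L -> Prop) (a : Arg L) : Prop :=
  exists F, subset F C /\ admissible Lg A F /\ F a.

Lemma admissible_union_admissible C :
  conflict_free Lg C -> admissible Lg A (admissible_union C).
Proof.
  intros HC. split.
  - intros a b [F [HF [_ Fa]]] [G [HG [_ Gb]]]; auto.
  - intros a [F [HF [[Fcf Fdef] Fa]]].
    apply (defends_mono F); [| now apply Fdef].
    intros x Fx; exists F; repeat split; auto.
Qed.

Lemma is_Init_admissible_union S :
  compatible Lg S -> is_Init Lg A S (admissible_union (init_cand Lg A S)).
Proof.
  intros Hcomp. split; [| split].
  - intros a [F [HF [_ Fa]]]; auto.
  - now apply admissible_union_admissible, conflict_free_init_cand.
  - intros F HF Fadm a Fa; exists F; auto.
Qed.

Section Iteration.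
Variable S : L -> Prop.

Lemma RS_mono (E F : Arg L -> Prop) :
  subset E F -> subset (RS Lg A S E) (RS Lg A S F).
Proof. intros HEF a [Ha D]; split; [exact Ha | eapply defends_mono; eauto]. Qed.

Lemma admissible_sub_RS E :
  subset E (init_cand Lg A S) -> admissible Lg A E -> subset E (RS Lg A S E).
Proof.
  intros HE [_ Edef] a Ea.
  destruct (HE a Ea) as [Ha [HSent Hname]].
  repeat split; auto.
  intros s Hs; apply HSent; now left.
Qed.

Definition RS_omega (E : Arg L -> Prop) (a : Arg L) : Prop :=
  exists i, RSi Lg A S i E a.

Lemma RSi_le E :
  subset E (RS Lg A S E) ->
  forall i j, i <= j -> subset (RSi Lg A S i E) (RSi Lg A S j E).
Proof.
  intros HE.
  assert (Hstep : forall i, subset (RSi Lg A S i E) (RSi Lg A S (Datatypes.S i) E)).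
  { induction i; [exact HE | now apply RS_mono]. }
  induction 1; intros a Ha; [exact Ha | apply Hstep; auto].
Qed.

Lemma RS_omega_least E F :
  subset E F -> (forall a, RS Lg A S F a -> F a) -> subset (RS_omega E) F.
Proof.
  intros HEF HF a [i Hi]; revert a Hi.
  induction i; intros a Hi; [now apply HEF |].
  apply HF; eapply RS_mono; eauto.
Qed.

(* Only the finitely many attackers listed in [l] matter, and each is
   counter-attacked at some stage; the maximum of these stages works. *)
Lemma defends_chain (F : nat -> Arg L -> Prop) a :
  finite_set A ->
  (forall i j, i <= j -> subset (F i) (F j)) ->
  defends Lg A (fun c => exists i, F i c) a -> exists i, defends Lg A (F i) a.
Proof.
  intros [l Hl] Fmono D.
  assert (Hlist : forall l', exists i, forall b, In b l' -> A b -> attacks Lg b a ->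
            exists c, F i c /\ attacks Lg c b).
  { induction l' as [| b0 l' [i IH]]; [exists 0; intros b [] |].
    destruct (classic (A b0 /\ attacks Lg b0 a)) as [[Hb0 Hb0a] | Hno].
    - destruct (D b0 Hb0 Hb0a) as [c [[j Hj] Hcb0]].
      exists (max i j). intros b [<- | Hin] Hb Hba.
      + exists c; split; [eapply Fmono; [| exact Hj]; lia | exact Hcb0].
      + destruct (IH b Hin Hb Hba) as [c' [Hc' Hc'b]].
        exists c'; split; [eapply Fmono; [| exact Hc']; lia | exact Hc'b].
    - exists i. intros b [<- | Hin] Hb Hba; [tauto | auto]. }
  destruct (Hlist l) as [i Hi]; exists i.
  intros b Hb Hba; apply Hi; auto; now apply Hl.
Qed.

Lemma is_Argw_RS_omega I :
  finite_set A -> is_Init Lg A S I -> is_Argw Lg A S I (RS_omega I).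
Proof.
  intros Afin HI.
  destruct HI as [Icand [Iadm _]].
  pose proof (admissible_sub_RS I Icand Iadm) as HIRS.
  assert (Hstage : forall i, subset (RSi Lg A S i I) (RS_omega I))
    by (intros i a Ha; now exists i).
  split; [split; [| split] |].
  - intros a [[| i] Hi]; [apply (Icand a Hi) | apply Hi].
  - apply Hstage with (i := 0).
  - intros a; split.
    + intros [Ha D].
      destruct (defends_chain _ a Afin (RSi_le I HIRS) D) as [i Di].
      now exists (Datatypes.S i).
    + intros [i Hi].
      apply (RS_mono (RSi Lg A S i I)); [apply Hstage |].
      apply (RSi_le I HIRS i (Datatypes.S i)); auto.
  - intros E [_ [HIE HE]]. apply RS_omega_least; [exact HIE |].
    intros a; apply HE.
Qed.

End Iteration.
End Semantics.

Theorem mainTheorem7 (L : Type) (SB : SBAF L) (S : L -> Prop)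
  (HS : subset S (SentE (args SB)))
  (Hcomp : compatible (lang SB) S) :
  (exists I, is_Init (lang SB) (args SB) S I) /\
  forall I, is_Init (lang SB) (args SB) S I ->
    (exists W, is_Argw (lang SB) (args SB) S I W) /\
    forall W, is_Argw (lang SB) (args SB) S I W ->
      forall a, W a <-> exists i : nat, RSi (lang SB) (args SB) S i I a.
Proof.
  split; [eexists; now apply is_Init_admissible_union |].
  intros I HI.
  pose proof (is_Argw_RS_omega (lang SB) (args SB) S I (args_finite SB) HI)
    as [Uargw Uleast].
  split; [eexists; split; eauto |].
  intros W [Wargw Wleast] a; split.
  - apply (Wleast _ Uargw).
  - apply (Uleast W Wargw).
Qed.
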